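(* Let $q=2^h$ with $h\equiv 1\pmod 2$, and let $$U=\left\{\left(x,y,x^q+y^{q^2},x^{q^2}+y^q+y^{q^2}\right): x,y\in\mathbb F_{q^4}\right\},\qquad U'=\left\{\left(z,t,z^{q^3}+z^{q^2}+t^{q^2},z^{q^2}+t^{q^3}\right): z,t\in\mathbb F_{q^4}\right\}.$$ Then $U$ and $U'$ are $\mathrm{GL}(4,q^4)$-equivalent, i.e. there exists $A\in\mathrm{GL}(4,q^4)$ with $\{uA: u\in U\}=U'$.
   Context: $U'$ is the orthogonal complement $U^{\tau'}$ of $U$ with respect to the $\mathbb F_q$-bilinear form $\sigma'(X,Y)=\mathrm{Tr}_{q^4/q}(X_0Y_3+X_3Y_0-X_1Y_2-X_2Y_1)$ on $\mathbb F_{q^4}^4$, where $\mathrm{Tr}_{q^4/q}$ is the trace map from $\mathbb F_{q^4}$ to $\mathbb F_q$. *)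

From mathcomp Require Import all_boot all_order all_algebra.
Set Implicit Arguments. Unset Strict Implicit. Unset Printing Implicit Defensive.
Import GRing.Theory.
Local Open Scope ring_scope.

Definition vec4 (F : finFieldType) (a b c d : F) : 'rV[F]_4 :=
  \row_(i < 4) nth 0 [:: a; b; c; d] i.

Definition Uset (F : finFieldType) (q : nat) : {set 'rV[F]_4} :=
  [set vec4 x y (x ^+ q + y ^+ (q ^ 2)%N) (x ^+ (q ^ 2)%N + y ^+ q + y ^+ (q ^ 2)%N)
     | x : F, y : F].

Definition Uset' (F : finFieldType) (q : nat) : {set 'rV[F]_4} :=
  [set vec4 z t (z ^+ (q ^ 3)%N + z ^+ (q ^ 2)%N + t ^+ (q ^ 2)%N)
                (z ^+ (q ^ 2)%N + t ^+ (q ^ 3)%N)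
     | z : F, t : F].

From mathcomp Require Import all_boot all_order all_algebra all_field.
From mathcomp Require Import ring.
Set Implicit Arguments. Unset Strict Implicit. Unset Printing Implicit Defensive.
Import GRing.Theory.
Local Open Scope ring_scope.

(* In characteristic 2 the map x |-> x^q is additive, and |F| = q^4 makes its
   fourth iterate the identity.  The coordinates of U and U' are therefore
   sums of conjugates x^(q^i), y^(q^i), and an explicit 0/1 matrix A maps U
   into U' while its inverse B maps U' into U. *)

Notation i0 := (@Ordinal 4 0 isT).
Notation i1 := (@Ordinal 4 1 isT).
Notation i2 := (@Ordinal 4 2 isT).
Notation i3 := (@Ordinal 4 3 isT).

Lemma vec4_mulmx (F : finFieldType) (a b c d : F) (M : 'M[F]_4) :
  vec4 a b c d *m M =
  vec4 (a * M i0 i0 + b * M i1 i0 + c * M i2 i0 + d * M i3 i0)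
       (a * M i0 i1 + b * M i1 i1 + c * M i2 i1 + d * M i3 i1)
       (a * M i0 i2 + b * M i1 i2 + c * M i2 i2 + d * M i3 i2)
       (a * M i0 i3 + b * M i1 i3 + c * M i2 i3 + d * M i3 i3).
Proof.
apply/rowP => j; rewrite !mxE !big_ord_recr big_ord0 /= add0r !mxE /=.
by case: j => [[|[|[|[|?]]]] ?] //=;
  congr (_ + _ + _ + _); congr (_ * M _ _); apply/val_inj.
Qed.

Lemma imset_mulmx_eq (F : finFieldType) n (A B : 'M[F]_n) (U U' : {set 'rV[F]_n}) :
  B *m A = 1%:M ->
  [set u *m A | u in U] \subset U' -> [set v *m B | v in U'] \subset U ->
  [set u *m A | u in U] = U'.
Proof.
move=> BA1 sUA sU'B; apply/eqP; rewrite eqEsubset sUA /=.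
apply/subsetP => v U'v; apply/imsetP; exists (v *m B).
  by apply: (subsetP sU'B); apply: imset_f.
by rewrite -mulmxA BA1 mulmx1.
Qed.

(* Entries are given as naturals so that products of these matrices can be
   computed in nat and then reduced modulo 2. *)
Definition bitmx (F : finFieldType) (rows : seq (seq nat)) : 'M[F]_4 :=
  \matrix_(i < 4, j < 4) (nth 0 (nth [::] rows i) j)%:R.

Definition Amx F := bitmx F [:: [:: 0;1;0;1]; [:: 1;0;1;0]; [:: 1;1;0;1]; [:: 0;1;1;0]]%N.
Definition Bmx F := bitmx F [:: [:: 1;0;1;0]; [:: 1;1;1;1]; [:: 1;1;1;0]; [:: 0;1;1;1]]%N.

Section FieldOfOrderQ4.
Variables (F : finFieldType) (h : nat).
Hypothesis cardF : #|F| = ((2 ^ h) ^ 4)%N.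
Local Notation q := (2 ^ h)%N.

Lemma pchar2F : (2 \in [pchar F])%N.
Proof. by apply: (@card_finPcharP _ 2 (h * 4)); rewrite // cardF expnM. Qed.

Lemma natr_odd n : (n%:R : F) = (odd n)%:R.
Proof.
rewrite -[in LHS](odd_double_half n) natrD -mul2n natrM.
by rewrite (pcharf0 pchar2F) mul0r addr0.
Qed.

Lemma Bmx_mulmx_Amx : Bmx F *m Amx F = 1%:M.
Proof.
apply/matrixP => i j; rewrite !mxE !big_ord_recr big_ord0 /= add0r !mxE.
rewrite -!natrM -!natrD natr_odd.
by case: i => [[|[|[|[|?]]]] ?] //=; case: j => [[|[|[|[|?]]]] ?].
Qed.

(* [ring] knows nothing of the characteristic: an identity valid in F is proved
   by exhibiting the difference of its two sides as an explicit double. *)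
Lemma eq_mod_double (w a b : F) : b = a + 2%:R * w -> a = b.
Proof. by move=> ->; rewrite (pcharf0 pchar2F) mul0r addr0. Qed.

Definition frob (x : F) := x ^+ q.

Lemma frobD x y : frob (x + y) = frob x + frob y.
Proof.
apply: exprDn_pchar; rewrite (eq_pnat _ (pcharf_eq pchar2F)).
by rewrite pnatX pnat_id.
Qed.

Lemma expr_qpow k x : x ^+ (q ^ k) = iter k frob x.
Proof. by elim: k => [|k IHk]; rewrite ?expr1 // expnSr exprM IHk. Qed.

Lemma frob4 x : frob (frob (frob (frob x))) = x.
Proof. by rewrite -[RHS](expf_card x) cardF expr_qpow. Qed.

Lemma Uset_mulmx_Amx : [set u *m Amx F | u in Uset F q] \subset Uset' F q.
Proof.
apply/subsetP => _ /imsetP[_ /imset2P[x y _ _ ->] ->].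
rewrite vec4_mulmx !mxE /=; apply/imset2P.
exists (y + (x ^+ q + y ^+ (q ^ 2)))
       (x + (x ^+ q + y ^+ (q ^ 2)) + (x ^+ (q ^ 2) + y ^+ q + y ^+ (q ^ 2))) => //.
congr vec4; rewrite ?mulr1n ?mulr0n !expr_qpow /= -!/(frob _) ?frobD ?frob4.
- by ring.
- by ring.
- by apply: (@eq_mod_double (frob (frob (frob y)) + x + frob (frob (frob x)) + y)); ring.
- by apply: (@eq_mod_double (frob (frob (frob x)) + y + frob y)); ring.
Qed.

Lemma Uset'_mulmx_Bmx : [set v *m Bmx F | v in Uset' F q] \subset Uset F q.
Proof.
apply/subsetP => _ /imsetP[_ /imset2P[z t _ _ ->] ->].
rewrite vec4_mulmx !mxE /=; apply/imset2P.
exists (z + t + (z ^+ (q ^ 3) + z ^+ (q ^ 2) + t ^+ (q ^ 2)))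
       (t + (z ^+ (q ^ 3) + z ^+ (q ^ 2) + t ^+ (q ^ 2)) + (z ^+ (q ^ 2) + t ^+ (q ^ 3))) => //.
congr vec4; rewrite ?mulr1n ?mulr0n !expr_qpow /= -!/(frob _) ?frobD ?frob4.
- by ring.
- by ring.
- by apply: (@eq_mod_double (frob z + frob t + z - frob (frob z))); ring.
- by apply: (@eq_mod_double (frob (frob t) + frob z + 2%:R * z + t + frob t + frob (frob (frob z)))); ring.
Qed.

End FieldOfOrderQ4.

Theorem proposition4p6 (h : nat) (F : finFieldType) :
  odd h -> #|F| = ((2 ^ h) ^ 4)%N ->
  exists A : 'M[F]_4, A \in unitmx /\
    [set u *m A | u in Uset F (2 ^ h)] = Uset' F (2 ^ h).
Proof.
move=> _ cardF; have BA1 := Bmx_mulmx_Amx cardF.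
exists (Amx F); split; first by case: (mulmx1_unit BA1).
exact: imset_mulmx_eq BA1 (Uset_mulmx_Amx cardF) (Uset'_mulmx_Bmx cardF).
Qed.
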